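(* Let $T:\mathbb{Z}_{\ge 0}\to\mathbb{R}$ satisfy $T(mn) = T(m)T(n) + T(m-1)T(n-1)$ for all integers $m,n\ge 1$, and suppose $T(0)=0$ and $T(1)=1$. Write $c=T(2)$ and $d=T(3)$. Then $c^2+2c-1\neq 0$ and $$d=\frac{3c^3+c}{c^2+2c-1}.$$ Consequently, $T(n)$ for each $n\ge 2$ is uniquely determined by the value of $c$ alone: if $T'$ is another sequence satisfying the same product rule with $T'(0)=0$, $T'(1)=1$ and $T'(2)=c$, then $T'(n)=T(n)$ for all $n\ge 0$. *)

From Stdlib Require Import Reals.
Open Scope R_scope.

(* The product rule T(mn) = T(m)T(n) + T(m-1)T(n-1) for all m, n >= 1.
   For m, n >= 1 the nat subtraction m - 1 is exact. *)
Definition product_rule (T : nat -> R) : Prop :=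
  forall m n : nat, (1 <= m)%nat -> (1 <= n)%nat ->
    T (m * n)%nat = T m * T n + T (m - 1)%nat * T (n - 1)%nat.

(* Taking m = 2 and m = 4 in the product rule expresses T(2n) and T(2n-1)
   through T(n) and T(n-1), so by strong induction T is determined by
   c = T(2) and d = T(3).  Computing T(18) both as T(2*9) and as T(3*6) with
   these recursions gives the equation d (c^2 + 2c - 1) = 3c^3 + c, which is
   linear in d; its denominator cannot vanish, since then 3c^3 + c = 0 would
   force c = 0 and c^2 + 2c - 1 = -1. *)
From Stdlib Require Import Reals Lra Lia Psatz Arith.
Open Scope R_scope.

Section ProductRule.

Variable T : nat -> R.
Hypothesis rule : product_rule T.
Hypothesis T1 : T 1%nat = 1.

Lemma product_rule_double (n : nat) : (1 <= n)%nat ->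
  T (2 * n)%nat = T 2%nat * T n + T (n - 1)%nat.
Proof.
  intros Hn.
  rewrite (rule 2%nat n) by lia.
  simpl (2 - 1)%nat; rewrite T1; ring.
Qed.

Lemma product_rule_T4 : T 4%nat = T 2%nat * T 2%nat + 1.
Proof. rewrite <- T1; exact (product_rule_double 2%nat ltac:(lia)). Qed.

Lemma product_rule_double_pred (n : nat) : (1 <= n)%nat ->
  T (2 * n - 1)%nat = T n + (T 3%nat - T 2%nat) * T (n - 1)%nat.
Proof.
  intros Hn.
  (* compare T(4 * n) with T(2 * (2 * n)) *)
  assert (H4n : T (4 * n)%nat = T 4%nat * T n + T 3%nat * T (n - 1)%nat).
  { rewrite (rule 4%nat n) by lia; reflexivity. }
  replace (4 * n)%nat with (2 * (2 * n))%nat in H4n by lia.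
  rewrite (product_rule_double (2 * n)), (product_rule_double n), product_rule_T4 in H4n by lia.
  lra.
Qed.

Lemma product_rule_T3 :
  T 3%nat * (T 2%nat ^ 2 + 2 * T 2%nat - 1) = 3 * T 2%nat ^ 3 + T 2%nat.
Proof.
  set (c := T 2%nat); set (d := T 3%nat).
  assert (H5 : T 5%nat = d + (d - c) * c).
  { exact (product_rule_double_pred 3%nat ltac:(lia)). }
  assert (H6 : T 6%nat = c * d + c).
  { exact (product_rule_double 3%nat ltac:(lia)). }
  assert (H8 : T 8%nat = c * T 4%nat + d).
  { exact (product_rule_double 4%nat ltac:(lia)). }
  assert (H9 : T 9%nat = d * d + c * c).
  { exact (rule 3%nat 3%nat ltac:(lia) ltac:(lia)). }
  assert (H18_2 : T 18%nat = c * T 9%nat + T 8%nat).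
  { exact (product_rule_double 9%nat ltac:(lia)). }
  assert (H18_3 : T 18%nat = d * T 6%nat + c * T 5%nat).
  { exact (rule 3%nat 6%nat ltac:(lia) ltac:(lia)). }
  rewrite H18_2, H9, H8, product_rule_T4 in H18_3; fold c in H18_3.
  rewrite H6, H5 in H18_3.
  lra.
Qed.

Lemma product_rule_denominator_neq0 : T 2%nat ^ 2 + 2 * T 2%nat - 1 <> 0.
Proof.
  intros Hden.
  pose proof product_rule_T3 as H3; rewrite Hden, Rmult_0_r in H3.
  assert (Hc : T 2%nat = 0) by nra.
  rewrite Hc in Hden; lra.
Qed.

Lemma product_rule_T3_eq :
  T 3%nat = (3 * T 2%nat ^ 3 + T 2%nat) / (T 2%nat ^ 2 + 2 * T 2%nat - 1).
Proof.
  rewrite <- product_rule_T3; field; exact product_rule_denominator_neq0.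
Qed.

End ProductRule.

Lemma product_rule_eq (T T' : nat -> R) :
  product_rule T -> product_rule T' -> T 1%nat = 1 -> T' 1%nat = 1 ->
  (forall k, (k <= 3)%nat -> T' k = T k) ->
  forall n, T' n = T n.
Proof.
  intros rule rule' T1 T1' Hsmall n.
  induction n as [n IH] using (well_founded_induction lt_wf).
  destruct (Nat.le_gt_cases n 3) as [Hn | Hn]; [now apply Hsmall |].
  assert (H2 : T' 2%nat = T 2%nat) by (apply Hsmall; lia).
  assert (H3 : T' 3%nat = T 3%nat) by (apply Hsmall; lia).
  destruct (Nat.Even_or_Odd n) as [[m ->] | [m ->]].
  - rewrite (product_rule_double T rule T1 m), (product_rule_double T' rule' T1' m)
      by lia.
    rewrite H2, (IH m), (IH (m - 1)%nat) by lia; reflexivity.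
  - replace (2 * m + 1)%nat with (2 * (m + 1) - 1)%nat by lia.
    rewrite (product_rule_double_pred T rule T1 (m + 1)),
      (product_rule_double_pred T' rule' T1' (m + 1)) by lia.
    rewrite H2, H3, (IH (m + 1)%nat), (IH (m + 1 - 1)%nat) by lia; reflexivity.
Qed.

Theorem lemma10 (T : nat -> R) :
  product_rule T -> T 0%nat = 0 -> T 1%nat = 1 ->
  let c := T 2%nat in
  let d := T 3%nat in
  c ^ 2 + 2 * c - 1 <> 0 /\
  d = (3 * c ^ 3 + c) / (c ^ 2 + 2 * c - 1) /\
  (forall T' : nat -> R,
     product_rule T' -> T' 0%nat = 0 -> T' 1%nat = 1 -> T' 2%nat = c ->
     forall n : nat, T' n = T n).
Proof.
  intros rule T0 T1 c d.
  split; [exact (product_rule_denominator_neq0 T rule T1) |].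
  split; [exact (product_rule_T3_eq T rule T1) |].
  intros T' rule' T0' T1' T2'.
  apply (product_rule_eq T T' rule rule' T1 T1').
  intros k Hk.
  destruct k as [| [| [| [| k]]]]; try lia.
  - now rewrite T0, T0'.
  - now rewrite T1, T1'.
  - exact T2'.
  - rewrite (product_rule_T3_eq T rule T1), (product_rule_T3_eq T' rule' T1'), T2'.
    reflexivity.
Qed.
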